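(* Let $(X,\mathrm{dist})$ be a metric space, $\Sigma$ a metric space, $\{U_\sigma(t,\tau)\}_{\sigma\in\Sigma}$ a family of processes on $X$, and $\Sigma_0\subset\Sigma$ a dense subset. Suppose that for every bounded set $C\subset X$ there exists $t_C\ge0$ such that the map $\sigma\mapsto U_\sigma(t,\tau)x$ from $\Sigma$ to $X$ is continuous for every fixed $x\in C$ and all $t,\tau$ with $t-\tau\ge t_C$. Then every set $K\subset X$ that is uniformly attracting for the subfamily $\{U_\sigma(t,\tau)\}_{\sigma\in\Sigma_0}$ is uniformly attracting for the whole family $\{U_\sigma(t,\tau)\}_{\sigma\in\Sigma}$.
   Context: A process on $X$ is a family of maps $U(t,\tau):X\to X$, indexed by reals $t\ge\tau$, with $U(\tau,\tau)=\mathrm{id}_X$ and $U(t,\tau)=U(t,s)U(s,\tau)$ for $t\ge s\ge\tau$. For nonempty $B,C\subset X$, $\delta_X(B,C)=\sup_{x\in B}\inf_{\xi\in C}\mathrm{dist}(x,\xi)$. For a family $\{U_\sigma(t,\tau)\}_{\sigma\in\Lambda}$, a set $K\subset X$ is uniformly attracting if for every bounded $C\subset X$, $\lim_{t-\tau\to\infty}\sup_{\sigma\in\Lambda}\delta_X(U_\sigma(t,\tau)C,K)=0$. *)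

From HB Require Import structures.
From mathcomp Require Import all_boot all_order all_algebra.
From mathcomp Require Import all_classical all_reals all_analysis.
Set Implicit Arguments. Unset Strict Implicit. Unset Printing Implicit Defensive.
Import Order.TTheory GRing.Theory Num.Theory.
Local Open Scope classical_set_scope.
Local Open Scope ring_scope.

Section defs.
Context {R : realType}.

Definition is_process {X : Type} (U : R -> R -> X -> X) : Prop :=
  (forall tau x, U tau tau x = x) /\
  (forall t s tau x, s <= t -> tau <= s -> U t tau x = U t s (U s tau x)).

Definition mbounded {X : metricType R} (C : set X) : Prop :=
  exists (x0 : X) (r : R), forall y, C y -> mdist x0 y <= r.

Definition hdelta {X : metricType R} (B C : set X) : \bar R :=
  ereal_sup [set ereal_inf [set (mdist x xi)%:E | xi in C] | x in B].

Definition unif_attracting {X Sig : metricType R}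
  (U : Sig -> R -> R -> X -> X) (Lam : set Sig) (K : set X) : Prop :=
  forall C : set X, mbounded C ->
  forall eps : R, 0 < eps -> exists T : R, forall t tau : R,
    tau <= t -> T <= t - tau ->
    (ereal_sup [set hdelta (U s t tau @` C) K | s in Lam] <= eps%:E)%E.

End defs.

From HB Require Import structures.
From mathcomp Require Import all_boot all_order all_algebra.
From mathcomp Require Import all_classical all_reals all_analysis.
Set Implicit Arguments. Unset Strict Implicit. Unset Printing Implicit Defensive.
Import Order.TTheory GRing.Theory Num.Theory.
Local Open Scope classical_set_scope.
Local Open Scope ring_scope.

(* For fixed t, tau and x, s |-> dist(U_s(t,tau) x, K) is continuous, since
   dist(., K) is 1-Lipschitz, so its value at any s is at most its supremum
   over the dense set Sig0.  Taking suprema over x in C and then over s, the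
   supremum of delta(U_s(t,tau) C, K) over the whole family is bounded by the
   one over Sig0 as soon as t - tau >= t_C. *)

Section distance_to_set.
Context {R : realType} {X : metricType R}.
Local Open Scope ereal_scope.

Definition dist_set (x : X) (K : set X) : \bar R :=
  ereal_inf [set (mdist x xi)%:E | xi in K].

Lemma dist_set_triangle (x y : X) (K : set X) :
  dist_set x K <= (mdist x y)%:E + dist_set y K.
Proof.
rewrite -leeBlDl //; apply: le_ereal_inf_tmp => _ [xi Kxi <-].
rewrite leeBlDl // -EFinD.
apply: le_trans (ereal_inf_lbound _) _; first by exists xi.
by rewrite lee_fin metric_triangle.
Qed.

Lemma dist_set_le_hdelta (B K : set X) (x : X) :
  B x -> dist_set x K <= hdelta B K.
Proof. by move=> Bx; apply: ereal_sup_ubound; exists x. Qed.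

Lemma dense_dist_set_le_sup (T : topologicalType) (f : T -> X) (D : set T)
    (K : set X) (s : T) :
  dense D -> {for s, continuous f} ->
  dist_set (f s) K <= ereal_sup [set dist_set (f s') K | s' in D].
Proof.
move=> dD fs; apply/lee_addgt0Pr => e e0.
have near_s : nbhs s (f @^-1` ball (f s) e) by apply: fs; exact: nbhsx_ballx.
have [s' [/nbhs_singleton fs's Ds']] :
    interior (f @^-1` ball (f s) e) `&` D !=set0.
  by apply: dD; [exists s; exact: near_s | exact: open_interior].
rewrite addeC; apply: le_trans (dist_set_triangle _ (f s') _) _.
apply: leeD; first by move: fs's; rewrite /= ballEmdist lee_fin => /ltW.
by apply: ereal_sup_ubound; exists s'.
Qed.

Lemma hdelta_sup_le_dense (T : topologicalType) (V : T -> X -> X)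
    (D : set T) (B K : set X) :
  dense D -> (forall x, B x -> continuous (V^~ x)) ->
  ereal_sup [set hdelta (V s @` B) K | s in setT]
    <= ereal_sup [set hdelta (V s @` B) K | s in D].
Proof.
move=> dD Vcont; apply: ge_ereal_sup => _ [s _ <-].
apply: ge_ereal_sup => _ [_ [x Bx <-] <-].
apply: le_trans (dense_dist_set_le_sup K dD (Vcont x Bx s)) _.
apply: ge_ereal_sup => _ [s' Ds' <-].
apply: le_trans (dist_set_le_hdelta K (imageP (V s') Bx)) _.
by apply: ereal_sup_ubound; exists s'.
Qed.

End distance_to_set.

Theorem proposition3p10 (R : realType) (X Sig : metricType R)
  (U : Sig -> R -> R -> X -> X) (Sig0 : set Sig) :
  (forall s : Sig, is_process (U s)) ->
  dense Sig0 ->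
  (forall C : set X, mbounded C ->
     exists tC : R, 0 <= tC /\
       forall x : X, C x -> forall t tau : R, tau <= t -> tC <= t - tau ->
         continuous (fun s : Sig => U s t tau x)) ->
  forall K : set X, unif_attracting U Sig0 K -> unif_attracting U setT K.
Proof.
move=> _ dS Ucont K attr C Cb eps eps0.
have [tC [_ UCcont]] := Ucont C Cb.
have [T HT] := attr C Cb eps eps0.
exists (Num.max T tC) => t tau le_tau_t; rewrite ge_max => /andP[T_le tC_le].
apply: le_trans _ (HT t tau le_tau_t T_le).
exact: hdelta_sup_le_dense dS (fun x Cx => UCcont x Cx t tau le_tau_t tC_le).
Qed.
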